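(* Let $$\Gamma=\left\langle\mathbb{Z}^3,\left(0,\begin{pmatrix}1&-1&0\\0&-1&0\\0&0&-1\end{pmatrix}\right)\right\rangle\subseteq\mathrm{Aff}(\mathbb{R}^3),$$ with holonomy group $F\subseteq\mathrm{GL}_3(\mathbb{Z})$ (of order $2$, generated by the displayed matrix), and let $\varphi=\xi_{(d,D)}\in\mathrm{Aut}(\Gamma)$. Define $\delta=1$ if the third component $d_3$ of $d$ is an integer and $\delta=0$ otherwise. Then $$R(\varphi)=\left(\frac12\sum_{A\in F}|\det(I_3-AD)|_\infty\right)+4\delta.$$
   Context: $\mathrm{Aff}(\mathbb{R}^3)=\mathbb{R}^3\rtimes\mathrm{GL}_3(\mathbb{R})$ with multiplication $(d_1,D_1)(d_2,D_2)=(d_1+D_1d_2,D_1D_2)$; $\mathbb{Z}^3$ denotes $\{(z,I_3)\mid z\in\mathbb{Z}^3\}$. For $(d,D)\in\mathrm{Aff}(\mathbb{R}^3)$, $\xi_{(d,D)}$ denotes $\gamma\mapsto(d,D)\gamma(d,D)^{-1}$; every automorphism of $\Gamma$ has this form (and $d$ is uniquely determined by the automorphism). $R(\varphi)\in\{1,2,\dots\}\cup\{\infty\}$ is the number of classes of the relation $g\sim g'\iff\exists h\in\Gamma: g=hg'\varphi(h)^{-1}$. For an integer $x$, $|x|_\infty=|x|$ if $x\neq0$ and $\infty$ if $x=0$. *)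

From HB Require Import structures.
From mathcomp Require Import all_boot all_order all_algebra.
From mathcomp Require Import reals constructive_ereal.
Set Implicit Arguments. Unset Strict Implicit. Unset Printing Implicit Defensive.
Import Order.TTheory GRing.Theory Num.Theory.
Local Open Scope ring_scope.

Section Aff.
Variable R : realType.

(* Aff(R^3) = R^3 x| GL_3(R): pairs (d, D); D is required invertible where needed *)
Definition aff := ('cV[R]_3 * 'M[R]_3)%type.

Definition aff_mul (x y : aff) : aff := (x.1 + x.2 *m y.1, x.2 *m y.2).
Definition aff_inv (x : aff) : aff := (- (invmx x.2 *m x.1), invmx x.2).

Definition xi (dD : aff) (g : aff) : aff := aff_mul (aff_mul dD g) (aff_inv dD).

Definition int_vec (z : 'cV[R]_3) : Prop := forall i, z i 0 \is a Num.int.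

Definition Amat : 'M[R]_3 :=
  \matrix_(i < 3, j < 3)
    (if (i == 0 :> nat) && (j == 0 :> nat) then 1
     else if (i == 0 :> nat) && (j == 1 :> nat) then -1
     else if (i == j) then -1 else 0).

Inductive in_Gamma : aff -> Prop :=
| Gamma_trans z : int_vec z -> in_Gamma (z, 1%:M)
| Gamma_A : in_Gamma (0, Amat)
| Gamma_mul x y : in_Gamma x -> in_Gamma y -> in_Gamma (aff_mul x y)
| Gamma_inv x : in_Gamma x -> in_Gamma (aff_inv x).

Definition holF : seq 'M[R]_3 := [:: 1%:M; Amat].

(* xi_{(d,D)} restricts to an automorphism of Gamma (bijective onto Gamma;
   it is automatically a homomorphism, being a conjugation) *)
Definition xi_aut_Gamma (dD : aff) : Prop :=
  dD.2 \in unitmx /\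
  (forall g, in_Gamma g -> in_Gamma (xi dD g)) /\
  (forall g, in_Gamma g -> exists h, in_Gamma h /\ xi dD h = g).

Definition tw_conj (dD : aff) (g g' : aff) : Prop :=
  exists h, in_Gamma h /\ g = aff_mul (aff_mul h g') (aff_inv (xi dD h)).

Definition has_n_classes (dD : aff) (n : nat) : Prop :=
  exists f : 'I_n -> aff,
    (forall i, in_Gamma (f i)) /\
    (forall i j, tw_conj dD (f i) (f j) -> i = j) /\
    (forall g, in_Gamma g -> exists i, tw_conj dD g (f i)).

Definition infinitely_many_classes (dD : aff) : Prop :=
  forall n : nat, exists f : 'I_n -> aff,
    (forall i, in_Gamma (f i)) /\
    (forall i j, tw_conj dD (f i) (f j) -> i = j).

(* R(xi_{(d,D)}) = r, with r in {1,2,...} u {oo} encoded in \bar R *)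
Definition reidemeister_eq (dD : aff) (r : \bar R) : Prop :=
  match r with
  | +oo%E => infinitely_many_classes dD
  | (x%:E)%E => exists n : nat, x = n%:R /\ has_n_classes dD n
  | -oo%E => False
  end.

Definition abs_inf (x : R) : \bar R := if x == 0 then +oo%E else (`|x|)%:E.

Definition third_comp (d : 'cV[R]_3) : R := d (@Ordinal 3 2 isT) 0.

End Aff.

From HB Require Import structures.
From mathcomp Require Import all_boot all_order all_algebra.
From mathcomp Require Import reals constructive_ereal.
From mathcomp Require Import ring lra zify.
Set Implicit Arguments. Unset Strict Implicit. Unset Printing Implicit Defensive.
Import Order.TTheory GRing.Theory Num.Theory.
Local Open Scope ring_scope.

(** The automorphism [xi (d, D)] forces [D] to be an integral unimodular matrix
    commuting with [A] and [c := (1 - A) d] to be integral.  Twisted conjugacy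
    preserves the two cosets [Z^3 * B] ([B = 1, A]) of [Gamma]; on the coset of [B]
    it is the equivalence relation on [Z^3] generated by the translations by
    [M Z^3], [M := 1 - B D], and by the affine involution [z |-> A z - B c].
    If [det M = 0], a rational linear form killing [M Z^3] and an eigenvector of
    [A] separates infinitely many classes.  Otherwise the classes are the orbits
    of the induced involution of the group [Z^3 / M Z^3] of order [|det M|], so
    there are [(|det M| + #fixed points) / 2] of them.  Commuting with [A] puts [D]
    in an explicit normal form, in which the fixed points form a coset of a
    subgroup of order 4 if [d_3] is an integer, and do not exist otherwise. *)

Definition transversal (I X : Type) (S : X -> Prop) (rel : X -> X -> Prop)
    (f : I -> X) : Prop :=
  (forall i, S (f i)) /\ (forall i j, rel (f i) (f j) -> i = j) /\
  (forall x, S x -> exists i, rel x (f i)).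

(** * Cokernels of integer matrices *)

(* ['I_(`|s|.-1).+1] is ['I_`|s|] for [s != 0], and is never empty, so that
   [inord] applies. *)
Definition residue (s x : int) : 'I_(`|s|.-1).+1 := inord `|(x %% s)%Z|%N.

Lemma residue_lt s x : s != 0 -> (`|(x %% s)%Z|%N < (`|s|.-1).+1)%N.
Proof.
move=> s0; rewrite prednK ?absz_gt0 //.
have := modz_ge0 x s0; have := ltz_mod x s0; lia.
Qed.

Lemma residue_eq s x y : s != 0 ->
  (residue s x == residue s y) = (x == y %[mod s])%Z.
Proof.
move=> s0; rewrite -val_eqE /= /residue !inordK ?residue_lt //.
have := modz_ge0 x s0; have := modz_ge0 y s0.
by move=> hy hx; apply/eqP/eqP; lia.
Qed.

Lemma residue_nat s (k : 'I_(`|s|.-1).+1) : s != 0 -> residue s k = k.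
Proof.
move=> s0; apply: val_inj; rewrite /= /residue inordK ?residue_lt //.
have : (k < `|s|)%N by case: k => k /=; rewrite prednK ?absz_gt0.
by move=> lt; rewrite -modz_abs modz_small //; lia.
Qed.

Definition modmx_eq n (M : 'M[int]_n) (z z' : 'cV[int]_n) : Prop :=
  exists w, z - z' = M *m w.

Lemma cokernel_classifier n (M : 'M[int]_n) : \det M != 0 ->
  exists (T : finType) (key : 'cV[int]_n -> T) (rep : T -> 'cV[int]_n),
    [/\ #|T| = `|\det M|%N, cancel rep key &
        forall z z', key z = key z' <-> modmx_eq M z z'].
Proof.
move=> detM0.
have [L uL [R uR [s _ EM]]] := int_Smith_normal_form M.
set S := \matrix_(i, j) _ in EM.
have ES : S = diag_mx (\row_i s`_i) by apply/matrixP=> i j; rewrite !mxE.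
have detM : \det M = \det L * \prod_(i < n) s`_i * \det R.
  by rewrite EM !det_mulmx ES det_diag; under eq_bigr do rewrite mxE.
have s0 (i : 'I_n) : s`_i != 0.
  move: detM0; rewrite detM !mulf_eq0 !negb_or => /andP[/andP[_]].
  by rewrite (bigD1 i) //= mulf_eq0 negb_or => /andP[].
pose T := {dffun forall i : 'I_n, 'I_(`|s`_i|.-1).+1}.
pose key (z : 'cV[int]_n) : T := [ffun i : 'I_n => residue s`_i ((invmx L *m z) i 0)].
pose rep (t : T) : 'cV[int]_n := L *m \col_i (t i : nat)%:Z.
have unit_abs (U : 'M[int]_n) : U \in unitmx -> `|\det U|%N = 1%N.
  by rewrite unitmxE => /orP[] /eqP ->.
exists T, key, rep; split.
- rewrite card_dep_ffun foldrE big_map big_enum /= detM !abszM !unit_abs // mul1n muln1.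
  rewrite (big_morph absz abszM (erefl : `|1|%N = 1%N)).
  by apply: eq_bigr => i _; rewrite card_ord prednK ?absz_gt0.
- move=> t; apply/ffunP => i; rewrite ffunE /rep mulKmx // mxE.
  exact: residue_nat.
- have coordB z z' i :
      (invmx L *m (z - z')) i 0 = (invmx L *m z) i 0 - (invmx L *m z') i 0.
    by rewrite mulmxBr [LHS]mxE [X in _ + X]mxE.
  move=> z z'; split => [/ffunP E | [w Ew]].
  + set y := invmx L *m (z - z').
    have dvd_y i : (s`_i %| y i ord0)%Z.
      by have := E i; rewrite !ffunE => /eqP; rewrite residue_eq // eqz_mod_dvd -coordB.
    exists (invmx R *m \col_i divz (y i 0) s`_i).
    rewrite EM ES -!mulmxA mulKVmx // mul_diag_mx -[z - z'](mulKVmx uL) -/y.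
    congr (_ *m _); clearbody y; apply/matrixP => i j.
    by rewrite (ord1 j) !mxE mulrC divzK.
  + apply/ffunP => i; rewrite !ffunE; apply/eqP.
    rewrite residue_eq // eqz_mod_dvd -coordB Ew EM ES -!mulmxA mulKmx //.
    by rewrite mul_diag_mx !mxE dvdz_mulr.
Qed.

(** * Orbits of an involution of a cokernel *)

Lemma involution_class_count (X : Type) (rel : X -> X -> Prop) (T : finType)
    (key : X -> T) (rep : T -> X) (tau : T -> T) :
  involutive tau -> cancel rep key ->
  (forall x y, rel x y <-> key x = key y \/ key x = tau (key y)) ->
  exists2 n, (2 * n = #|T| + #|[set t | tau t == t]|)%N &
    exists f : 'I_n -> X, transversal (fun=> True) rel f.
Proof.
move=> tauK repK relE.
pose S := [set t | (enum_rank t <= enum_rank (tau t))%N].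
pose F := [set t | tau t == t].
have FS : F \subset S by apply/subsetP=> t; rewrite !inE => /eqP ->.
have notS t : t \notin S -> tau t \in S :\: F.
  rewrite !inE tauK -ltnNge => lt; rewrite (ltnW lt) andbT.
  by apply: contraTneq lt => <-; rewrite ltnn.
have CS : ~: S = tau @: (S :\: F).
  apply/setP=> t; rewrite inE; apply/idP/imsetP => [nSt | [u]].
    by exists (tau t); rewrite ?tauK ?notS.
  rewrite !inE => /andP[nFu uS] ->; rewrite -ltnNge tauK ltn_neqAle uS andbT.
  by apply: contra nFu => /eqP/val_inj/enum_rank_inj <-.
exists #|S|.
  have : #|~: S| = #|S :\: F| by rewrite CS card_imset //; exact: inv_inj.
  rewrite -(cardsC S) -(cardsID F S) (setIidPr FS) -/F; lia.
exists (fun i => rep (enum_val i)); split=> //; split=> [i j | x _].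
  rewrite relE !repK => -[|E]; first exact: enum_val_inj.
  have := enum_valP i; have := enum_valP j; rewrite !inE E tauK => le1 le2.
  by apply: enum_val_inj; rewrite E; apply/enum_rank_inj/val_inj/eqP; rewrite eqn_leq le1 le2.
have [xS | /notS] := boolP (key x \in S).
  by exists (enum_rank_in xS (key x)); rewrite relE repK enum_rankK_in //; left.
rewrite inE => /andP[_ tS].
by exists (enum_rank_in tS (tau (key x))); rewrite relE repK enum_rankK_in // tauK; right.
Qed.

Lemma det_mulmxI n k (P : 'M[int]_n) : \det P != 0 -> injective (@mulmx _ n n k P).
Proof.
move=> detP x y Exy; apply/eqP; rewrite -subr_eq0.
have : \adj P *m P *m (x - y) = 0 by rewrite -mulmxA mulmxBr Exy subrr mulmx0.
by rewrite mul_adj_mx mul_scalar_mx => /eqP; rewrite scalemx_eq0 (negbTE detP).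
Qed.

Lemma modmx_eq_affine n (M A : 'M[int]_n) (c z z' : 'cV[int]_n) :
  A *m M = M *m A -> modmx_eq M z z' -> modmx_eq M (A *m z + c) (A *m z' + c).
Proof.
move=> AM [w Ew]; exists (A *m w).
by rewrite opprD addrACA subrr addr0 -mulmxBr Ew !mulmxA AM.
Qed.

Lemma lattice_coset_transversal n (M P Q : 'M[int]_n) (z0 : 'cV[int]_n)
    (S : 'cV[int]_n -> Prop) :
  M = P *m Q -> \det M != 0 -> (forall z, S z <-> exists x, z = z0 + P *m x) ->
  exists (F : finType) (g : F -> 'cV[int]_n),
    #|F| = `|\det Q|%N /\ transversal S (modmx_eq M) g.
Proof.
move=> EM; rewrite EM det_mulmx mulf_eq0 negb_or => /andP[detP detQ] SE.
have [T [key [rep [cardT repK keyE]]]] := cokernel_classifier detQ.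
exists T, (fun t => z0 + P *m rep t); split=> //; split; [|split].
- by move=> t; apply/SE; exists (rep t).
- move=> t t' [w]; rewrite opprD addrACA subrr add0r -mulmxBr -mulmxA.
  by move/(det_mulmxI detP) => Ew; rewrite -(repK t) -(repK t'); apply/keyE; exists w.
- move=> z /SE[x ->].
  have [w Ew] := (keyE (rep (key x)) x).1 (repK _).
  exists (key x), (- w).
  by rewrite opprD addrACA subrr add0r -mulmxBr -opprB Ew !mulmxN mulmxA.
Qed.

Lemma modmx_eq_1BE n (B Dm : 'M[int]_n) (z y e : 'cV[int]_n) :
  modmx_eq (1 - B *m Dm) z (y - B *m e) <-> exists w, z = w + y - B *m (Dm *m w + e).
Proof.
have E w : w + y - B *m (Dm *m w + e) = y - B *m e + (1 - B *m Dm) *m w.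
  by rewrite mulmxBl mul1mx mulmxDr mulmxA opprD addrACA addrC.
split=> -[w Ew]; exists w; first by rewrite E -Ew addrC subrK.
by rewrite Ew E addrAC subrr add0r.
Qed.

(* Twisted conjugacy on one coset of [Gamma], transported to [Z^n]
   (see [tw_conj_coset]). *)
Definition twisted_rel n (M A : 'M[int]_n) (e : 'cV[int]_n) (z z' : 'cV[int]_n) :=
  modmx_eq M z z' \/ modmx_eq M z (A *m z' - e).

Section TwistedClasses.
Variables (n : nat) (M A : 'M[int]_n) (e : 'cV[int]_n).
Hypotheses (detM : \det M != 0) (AK : A *m A = 1) (AM : A *m M = M *m A)
  (Ae : A *m e = - e).

Lemma twisted_class_count (F : finType) (g : F -> 'cV[int]_n) :
  transversal (fun z => modmx_eq M (A *m z - e) z) (modmx_eq M) g ->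
  exists2 k, (2 * k = `|\det M| + #|F|)%N &
    exists f : 'I_k -> 'cV[int]_n, transversal (fun=> True) (twisted_rel M A e) f.
Proof.
case=> gS [g_inj g_cover].
have [T [key [rep [cardT repK keyE]]]] := cokernel_classifier detM.
pose tau t := key (A *m rep t - e).
have tauE z : tau (key z) = key (A *m z - e).
  by apply/keyE/modmx_eq_affine/keyE; rewrite ?repK.
have tauK : involutive tau.
  by move=> t; rewrite [tau t]/tau tauE mulmxBr mulmxA AK mul1mx Ae opprK addrK repK.
have relE z z' : twisted_rel M A e z z' <-> key z = key z' \/ key z = tau (key z').
  by rewrite tauE; split=> -[/keyE|/keyE]; by [left|right].
have fixE : [set t | tau t == t] = [set key (g x) | x : F].
  apply/setP=> t; rewrite inE; apply/eqP/imsetP => [tau_t | [x _ ->]].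
    have [x Ex] : exists x, modmx_eq M (rep t) (g x).
      by apply: g_cover; apply/keyE; rewrite -tauE repK.
    by exists x; rewrite // -(repK t); apply/keyE.
  by rewrite tauE; apply/keyE/gS.
have [k Ek f_tr] := involution_class_count tauK repK relE.
exists k => //; rewrite Ek cardT fixE card_imset // => x y /keyE; exact: g_inj.
Qed.

End TwistedClasses.

Lemma nat_eq_of_close (F : realDomainType) (i k : nat) (s X c : F) :
  s = 1 \/ s = -1 -> `|c| < `|X| -> i%:R * X = s * (k%:R * X) - c -> i = k.
Proof.
move=> hs hc E; apply/eqP; apply: contraLR hc => neq_ik; rewrite -leNgt.
have -> : c = (s * k%:R - i%:R) * X by rewrite mulrBl E; ring.
rewrite normrM ler_peMl // ?normr_ge0.
by case: hs => ->; rewrite ?mul1r ?mulN1r !pmulrn -!intrN -intrD -intr_norm ler1z; lia.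
Qed.

Local Notation toQ := (map_mx ( *~%R (1 : rat))).

Lemma singular_form_eigen n (M A : 'M[int]_n) :
  \det M = 0 -> A *m A = 1 -> A *m M = M *m A ->
  exists mu : 'rV[rat]_n,
    [/\ mu != 0, mu *m toQ M = 0 & mu *m toQ A = mu \/ mu *m toQ A = - mu].
Proof.
move=> detM AK AM.
have /det0P[l l0 lM] : \det (toQ M) == 0 by rewrite det_map_mx detM.
have lAM : l *m toQ A *m toQ M = 0.
  by rewrite -mulmxA -map_mxM AM map_mxM mulmxA lM mul0mx.
have [lA0 | lA0] := eqVneq (l + l *m toQ A) 0.
  by exists l; split=> //; right; apply/eqP; rewrite -addr_eq0 addrC lA0.
exists (l + l *m toQ A); split=> //; first by rewrite mulmxDl lM lAM addr0.
by left; rewrite mulmxDl -mulmxA -map_mxM AK map_mx1 mulmx1 addrC.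
Qed.

Lemma twisted_rel_infinite n (M A : 'M[int]_n) (e : 'cV[int]_n) :
  \det M = 0 -> A *m A = 1 -> A *m M = M *m A ->
  forall N, exists f : 'I_N -> 'cV[int]_n,
    forall i j, twisted_rel M A e (f i) (f j) -> i = j.
Proof.
move=> detM AK AM N; have [mu [mu0 muM muA]] := singular_form_eigen detM AK AM.
(* Along a twisted class [mu] moves by [0] or [+- (mu e)], and the [f i] below
   are spread further apart. *)
have [j muj] : exists j, mu 0 j != 0.
  apply/existsP; apply: contraR mu0 => /existsPn mu0.
  by apply/eqP/rowP => j; rewrite mxE; apply/eqP/negPn.
pose K := Num.bound (`|(mu *m toQ e) 0 0| / `|mu 0 j|).
have hK : `|(mu *m toQ e) 0 0| < `|K%:R * mu 0 j|.
  rewrite normrM normr_nat -ltr_pdivrMr ?normr_gt0 //.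
  exact/archi_boundP/divr_ge0.
pose f (i : 'I_N) : 'cV[int]_n := (i * K)%:R *: delta_mx j 0.
have muf i : (mu *m toQ (f i)) 0 0 = i%:R * (K%:R * mu 0 j).
  by rewrite /f map_mxZ map_delta_mx -scalemxAr mxE -colE mxE rmorph_nat natrM mulrA.
have hK0 : `|0 : rat| < `|K%:R * mu 0 j| by rewrite normr0 (le_lt_trans _ hK).
have entryB (u v : 'M[rat]_1) : (u - v) 0 0 = u 0 0 - v 0 0 by rewrite !mxE.
exists f => i i' [[w Ew] | [w Ew]]; move: (congr1 (fun v => (mu *m toQ v) 0 0) Ew).
  rewrite /= map_mxM mulmxA muM mul0mx map_mxB mulmxBr entryB !muf mxE.
  move=> /eqP; rewrite subr_eq0 => /eqP E.
  by apply/val_inj/(nat_eq_of_close (or_introl erefl) hK0); rewrite mul1r subr0.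
rewrite /= map_mxM mulmxA muM mul0mx !map_mxB map_mxM !mulmxBr mulmxA !entryB muf.
have entryN (u : 'M[rat]_1) : (- u) 0 0 = - u 0 0 by rewrite mxE.
case: muA => ->; rewrite ?mulNmx ?entryN muf [RHS]mxE.
all: move=> /eqP; rewrite subr_eq0 => /eqP E; apply/val_inj.
  by apply: (nat_eq_of_close (or_introl erefl) hK); rewrite mul1r.
by apply: (nat_eq_of_close (or_intror erefl) hK); rewrite mulN1r.
Qed.

(** * Explicit 3 x 3 matrices *)

Definition mx3 (R : nzRingType) (a b c d e f g h k : R) : 'M[R]_3 :=
  \matrix_(i < 3, j < 3)
    nth 0 (nth [::] [:: [:: a; b; c]; [:: d; e; f]; [:: g; h; k]] i) j.

Definition cv3 (R : nzRingType) (x y z : R) : 'cV[R]_3 :=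
  \col_(i < 3) nth 0 [:: x; y; z] i.

Ltac mx3_ext :=
  apply/matrixP; case=> [[|[|[|//]]] ?]; case=> [[|[|[|//]]] ?];
  rewrite !(mxE, big_ord_recl, big_ord0) /=.

Section Explicit3.
Variable R : comNzRingType.
Implicit Types a b c d e f g h k x y z : R.

Lemma cv3_eta (v : 'cV[R]_3) : v = cv3 (v 0 0) (v 1 0) (v 2 0).
Proof. by mx3_ext; congr (v _ _); apply/val_inj. Qed.

Lemma mx3_eta (A : 'M[R]_3) :
  A = mx3 (A 0 0) (A 0 1) (A 0 2) (A 1 0) (A 1 1) (A 1 2) (A 2 0) (A 2 1) (A 2 2).
Proof. by mx3_ext; congr (A _ _); apply/val_inj. Qed.

Lemma cv3_inj x y z x' y' z' :
  cv3 x y z = cv3 x' y' z' -> [/\ x = x', y = y' & z = z'].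
Proof. by move/matrixP=> E; have := E 0 0; have := E 1 0; have := E 2 0; rewrite !mxE. Qed.

Lemma mx3_inj a b c d e f g h k a' b' c' d' e' f' g' h' k' :
  mx3 a b c d e f g h k = mx3 a' b' c' d' e' f' g' h' k' ->
  [/\ a = a', b = b', c = c', d = d' & [/\ e = e', f = f', g = g', h = h' & k = k']].
Proof.
move/matrixP=> E.
have := E 0 0; have := E 0 1; have := E 0 2; have := E 1 0; have := E 1 1.
have := E 1 2; have := E 2 0; have := E 2 1; have := E 2 2; rewrite !mxE /=.
by move=> -> -> -> -> -> -> -> -> ->.
Qed.

Lemma mx3_1 : 1 = mx3 1 0 0 0 1 0 0 0 1 :> 'M[R]_3.
Proof. by mx3_ext. Qed.

Lemma mx3B a b c d e f g h k a' b' c' d' e' f' g' h' k' :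
  mx3 a b c d e f g h k - mx3 a' b' c' d' e' f' g' h' k' =
  mx3 (a - a') (b - b') (c - c') (d - d') (e - e') (f - f') (g - g') (h - h') (k - k').
Proof. by mx3_ext. Qed.

Lemma cv3D x y z x' y' z' : cv3 x y z + cv3 x' y' z' = cv3 (x + x') (y + y') (z + z').
Proof. by mx3_ext. Qed.

Lemma cv3B x y z x' y' z' : cv3 x y z - cv3 x' y' z' = cv3 (x - x') (y - y') (z - z').
Proof. by mx3_ext. Qed.

Lemma mx3_cv3 a b c d e f g h k x y z :
  mx3 a b c d e f g h k *m cv3 x y z =
  cv3 (a * x + b * y + c * z) (d * x + e * y + f * z) (g * x + h * y + k * z).
Proof. by mx3_ext; ring. Qed.

Lemma mx3M a b c d e f g h k a' b' c' d' e' f' g' h' k' :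
  mx3 a b c d e f g h k *m mx3 a' b' c' d' e' f' g' h' k' =
  mx3 (a * a' + b * d' + c * g') (a * b' + b * e' + c * h') (a * c' + b * f' + c * k')
      (d * a' + e * d' + f * g') (d * b' + e * e' + f * h') (d * c' + e * f' + f * k')
      (g * a' + h * d' + k * g') (g * b' + h * e' + k * h') (g * c' + h * f' + k * k').
Proof. by mx3_ext; ring. Qed.

Lemma det_mx3 a b c d e f g h k : \det (mx3 a b c d e f g h k) =
  a * (e * k - f * h) - b * (d * k - f * g) + c * (d * h - e * g).
Proof.
rewrite (expand_det_row _ 0) !big_ord_recl big_ord0 /cofactor.
rewrite !(expand_det_row _ 0) !big_ord_recl !big_ord0 /cofactor !det_mx11 !mxE /=.
by rewrite !expr0 !expr1 ?exprS ?expr0; ring.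
Qed.

Lemma det_mx3_col0 a b c e f h k :
  \det (mx3 a b c 0 e f 0 h k) = a * (e * k - f * h).
Proof. by rewrite det_mx3; ring. Qed.

End Explicit3.

Definition Aint : 'M[int]_3 := mx3 1 (-1) 0 0 (-1) 0 0 0 (-1).

Definition Dform (b p q t : int) : 'M[int]_3 :=
  mx3 (-1) b p 0 (2 * b - 1) (2 * p) 0 t q.

Lemma AintK : Aint *m Aint = 1.
Proof. by rewrite /Aint mx3M mx3_1; congr mx3; ring. Qed.

Lemma Aint_Dform b p q t : Aint *m Dform b p q t = Dform (1 - b) (- p) (- q) (- t).
Proof. by rewrite /Aint /Dform mx3M; congr mx3; ring. Qed.

Lemma Aint_1BDform_comm b p q t :
  Aint *m (1 - Dform b p q t) = (1 - Dform b p q t) *m Aint.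
Proof. by rewrite /Aint /Dform mx3_1 !mx3B !mx3M; congr mx3; ring. Qed.

Lemma Dform_of_commute (D : 'M[int]_3) :
  D *m Aint = Aint *m D -> D \in unitmx -> \det (1 - D) != 0 ->
  exists b p q t k, D = Dform b p q t /\ q = 2 * k + 1.
Proof.
rewrite (mx3_eta D) unitmxE.
move: (D 0 0) (D 0 1) (D 0 2) (D 1 0) (D 1 1) (D 1 2) (D 2 0) (D 2 1) (D 2 2)
  => a b p x10 x11 x12 x20 t q.
rewrite /Aint !mx3M => /mx3_inj [h00 h01 h02 h10 [h11 h12 h20 h21 h22]].
have -> : mx3 a b p x10 x11 x12 x20 t q = mx3 a b p 0 (2 * b + a) (2 * p) 0 t q.
  by congr mx3; lia.
rewrite det_mx3_col0 unitrM mx3_1 mx3B !subrr !sub0r det_mx3_col0.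
case/andP=> /orP[]/eqP-> uX; first by rewrite subrr mul0r eqxx.
move=> _; case/orP: uX => /eqP hX.
- by exists b, p, q, t, (b * q - p * t - 1); split; [|lia].
- by exists b, p, q, t, (b * q - p * t); split; [|lia].
Qed.

Section DformFixedPoints.
Variables (b p q t k e1 e3 : int).
Hypothesis oddq : q = 2 * k + 1.

Let M := 1 - Dform b p q t.
Let e := cv3 e1 (2 * e1) e3.
(* For even [e3], the solutions of [A z - e = z (mod M)] form the coset
   [cv3 0 (- e1) (- e3 / 2) + P Z^3], and [det Q = 4]. *)
Let P := mx3 1 0 0 0 (2 - 2 * b) (- p) 0 (- t) (- k).
Let Q : 'M[int]_3 := mx3 2 (- b) (- p) 0 1 0 0 0 2.

Lemma Dform_1BE : M = mx3 2 (- b) (- p) 0 (2 - 2 * b) (- (2 * p)) 0 (- t) (- (2 * k)).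
Proof. by rewrite /M /Dform mx3_1 mx3B oddq; congr mx3; ring. Qed.

Lemma Dform_1B_factor : M = P *m Q.
Proof. by rewrite Dform_1BE /P /Q mx3M; congr mx3; ring. Qed.

Lemma Aint_mul_e : Aint *m e = - e.
Proof. by rewrite /Aint /e mx3_cv3; mx3_ext; ring. Qed.

Lemma Dform_fixed_even z : modmx_eq M (Aint *m z - e) z -> (2 %| e3)%Z.
Proof.
case=> w; rewrite (cv3_eta z) (cv3_eta w) Dform_1BE /Aint /e !mx3_cv3 !cv3B.
move: (z 0 0) (z 1 0) (z 2 0) (w 0 0) (w 1 0) (w 2 0) => z0 z1 z2 w0 w1 w2.
case/cv3_inj=> h0 h1 h2; apply/dvdzP; exists (t * w0 + k * w2 - z2); nia.
Qed.

Lemma Dform_fixed_lattice k3 z : e3 = 2 * k3 ->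
  modmx_eq M (Aint *m z - e) z <-> exists x, z = cv3 0 (- e1) (- k3) + P *m x.
Proof.
move=> Ee3; rewrite (cv3_eta z) /modmx_eq Dform_1BE /Aint /e Ee3 /P.
move: (z 0 0) (z 1 0) (z 2 0) => z0 z1 z2; split=> [[w] | [x]].
- rewrite (cv3_eta w) !mx3_cv3 !cv3B.
  move: (w 0 0) (w 1 0) (w 2 0) => w0 w1 w2 /cv3_inj[h0 h1 h2].
  by exists (cv3 z0 (- w0) (- w2)); rewrite mx3_cv3 cv3D; congr cv3; nia.
- rewrite (cv3_eta x) mx3_cv3 cv3D; move: (x 0 0) (x 1 0) (x 2 0) => x0 x1 x2.
  case/cv3_inj=> -> -> ->; exists (cv3 (- x1) (-2 * x1) (- x2)).
  by rewrite !mx3_cv3 !cv3B; congr cv3; ring.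
Qed.

Lemma Dform_fixed_transversal : \det M != 0 ->
  exists (F : finType) (g : F -> 'cV[int]_3),
    #|F| = (if (2 %| e3)%Z then 4 else 0)%N /\
    transversal (fun z => modmx_eq M (Aint *m z - e) z) (modmx_eq M) g.
Proof.
move=> detM; case: ifPn => [/dvdzP[k3 Ee3] | odd_e3].
  rewrite mulrC in Ee3.
  have [F [g [cardF g_tr]]] := lattice_coset_transversal Dform_1B_factor detM
    (fun z => Dform_fixed_lattice z Ee3).
  by exists F, g; rewrite cardF /Q det_mx3_col0.
exists void, (@of_void _); split; first exact: card_void.
split; [by case | split; [by case |]].
by move=> z /Dform_fixed_even; rewrite (negbTE odd_e3).
Qed.

Lemma Dform_class_count : \det M != 0 ->
  exists2 n, (2 * n = `|\det M| + (if (2 %| e3)%Z then 4 else 0))%N &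
    exists f : 'I_n -> 'cV[int]_3, transversal (fun=> True) (twisted_rel M Aint e) f.
Proof.
move=> detM; have [F [g [<- g_tr]]] := Dform_fixed_transversal detM.
apply: (twisted_class_count detM AintK) g_tr; [exact: Aint_1BDform_comm | exact: Aint_mul_e].
Qed.

End DformFixedPoints.

(** * Twisted conjugacy in Gamma *)

Section RealAffine.
Variable R : realType.
Local Notation toR := (map_mx ( *~%R (1 : R))).

Lemma toR_inj m n : injective (toR : 'M[int]_(m, n) -> 'M[R]_(m, n)).
Proof.
move=> A B /matrixP E; apply/matrixP => i j.
by have := E i j; rewrite !mxE => /eqP; rewrite eqr_int => /eqP.
Qed.

Lemma int_mxP m n (A : 'M[R]_(m, n)) :
  (exists Ai, A = toR Ai) <-> forall i j, A i j \is a Num.int.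
Proof.
split=> [[Ai ->] i j | A_int]; first by rewrite mxE intr_int.
by exists (map_mx Num.floor A); apply/matrixP => i j; rewrite !mxE floorK.
Qed.

Lemma int_vecP (z : 'cV[R]_3) : int_vec z <-> exists zi, z = toR zi.
Proof. by rewrite int_mxP; split=> zI i // j; rewrite (ord1 j). Qed.

Lemma Amat_int : Amat R = toR Aint.
Proof. by rewrite /Amat /Aint; mx3_ext. Qed.

Lemma AmatK : Amat R *m Amat R = 1.
Proof. by rewrite Amat_int -map_mxM AintK map_mx1. Qed.

Lemma invmx_Amat : invmx (Amat R) = Amat R.
Proof.
have [Aunit _] := mulmx1_unit AmatK.
by rewrite -[RHS]mul1mx -(mulVmx Aunit) -mulmxA AmatK mulmx1.
Qed.

Lemma Amat_neq1 : Amat R != 1%:M.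
Proof. by apply/eqP => /matrixP /(_ 1 1); rewrite !mxE /=; lra. Qed.

Lemma holFP B : reflect (B = 1%:M \/ B = Amat R) (B \in holF R).
Proof.
rewrite !inE; apply: (iffP orP) => -[] E; by [left; apply/eqP | right; apply/eqP].
Qed.

Lemma holF_mulmx B B' : B \in holF R -> B' \in holF R -> B *m B' \in holF R.
Proof.
move=> /holFP[]-> /holFP[]->; apply/holFP;
rewrite ?mul1mx ?mulmx1 ?AmatK; by [left | right].
Qed.

Lemma invmx_holF B : B \in holF R -> invmx B = B.
Proof. by case/holFP=> ->; rewrite ?invmx1 ?invmx_Amat. Qed.

Lemma holF_conj B B' : B \in holF R -> B' \in holF R -> B *m B' *m B = B'.
Proof. by move=> /holFP[]-> /holFP[]->; rewrite ?mul1mx ?mulmx1 ?AmatK ?mul1mx. Qed.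

Lemma in_GammaP g :
  in_Gamma g <-> (exists z, g.1 = toR z) /\ g.2 \in holF R.
Proof.
split.
- elim=> [z /int_vecP | | [x Bx] [y By] _ [[x1 /= ->] hBx] _ [[y1 /= ->] hBy]
         | [x Bx] _ [[x1 /= ->] hBx]].
  + by split; rewrite ?inE ?eqxx.
  + by split; [exists 0; rewrite map_mx0 | rewrite !inE eqxx orbT].
  + split; last exact: holF_mulmx.
    case/holFP: hBx => ->; [exists (x1 + y1) | exists (x1 + Aint *m y1)];
    by rewrite /= map_mxD ?map_mxM -?Amat_int ?mul1mx.
  + case/holFP: hBx => ->; rewrite /aff_inv /= ?invmx1 ?invmx_Amat; split.
    * by exists (- x1); rewrite mul1mx map_mxN.
    * by rewrite inE eqxx.
    * by exists (- (Aint *m x1)); rewrite map_mxN map_mxM -Amat_int.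
    * by rewrite !inE eqxx orbT.
- case: g => _ B /= [[z ->] /holFP[]->].
  + by apply: Gamma_trans; apply/int_vecP; exists z.
  + have -> : (toR z, Amat R) = aff_mul (toR z, 1%:M) (0, Amat R).
      by rewrite /aff_mul /= mulmx0 addr0 mul1mx.
    by apply: Gamma_mul; [apply: Gamma_trans; apply/int_vecP; exists z | exact: Gamma_A].
Qed.

Lemma xiE (d : 'cV[R]_3) D w B :
  xi (d, D) (w, B) = (d + D *m w - D *m B *m invmx D *m d, D *m B *m invmx D).
Proof. by rewrite /xi /aff_mul /aff_inv /=; congr pair; rewrite mulmxN !mulmxA. Qed.

Lemma mulmx_delta_entry m n (A : 'M[R]_(m, n)) i j :
  (A *m (delta_mx j 0 : 'cV_n)) i 0 = A i j.
Proof. by rewrite -colE mxE. Qed.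

Lemma conjmx_eq n (D B C : 'M[R]_n) :
  D \in unitmx -> D *m B *m invmx D = C -> B = invmx D *m C *m D.
Proof. by move=> Du <-; rewrite !mulmxA mulVmx // mul1mx mulmxKV. Qed.

Section Automorphism.
Variables (d : 'cV[R]_3) (D : 'M[R]_3).
Hypothesis aut : xi_aut_Gamma (d, D).

Let D_unit : D \in unitmx. Proof. by case: aut. Qed.

Let trans_Gamma (v : 'cV[int]_3) : in_Gamma (toR v, 1%:M).
Proof. by apply/in_GammaP; split; [exists v | rewrite inE eqxx]. Qed.

Lemma xi_aut_Amat : D *m Amat R = Amat R *m D /\ exists c, (1 - Amat R) *m d = toR c.
Proof.
have [_ [img _]] := aut.
move: (img _ (@Gamma_A R)); rewrite xiE mulmx0 addr0 => /in_GammaP[[c /= cE]].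
case/holFP=> /= DA.
  by case/eqP: Amat_neq1; rewrite (conjmx_eq D_unit DA) mulmx1 mulVmx.
split; first by rewrite -{2}DA mulmxKV.
by exists c; rewrite -cE DA mulmxBl mul1mx.
Qed.

Lemma xi_aut_int : (exists Di, D = toR Di) /\ exists Ei, invmx D = toR Ei.
Proof.
have [_ [img surj]] := aut.
split; apply/int_mxP => i j.
  move: (img _ (trans_Gamma (delta_mx j 0))).
  rewrite xiE map_delta_mx mulmx1 mulmxV // mul1mx addrAC subrr add0r.
  by case/in_GammaP=> -[v /= vE] _; rewrite -mulmx_delta_entry vE mxE intr_int.
have [[w B] [/in_GammaP[[wi /= ->] _]]] := surj _ (trans_Gamma (delta_mx j 0)).
rewrite xiE map_delta_mx => -[Ew /(conjmx_eq D_unit)]; rewrite mulmx1 mulVmx // => EB.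
move: Ew; rewrite EB mulmx1 mulmxV // mul1mx addrAC subrr add0r => Ew.
by rewrite -mulmx_delta_entry -Ew mulKmx // mxE intr_int.
Qed.

Lemma xi_aut_Gamma_int : exists Di c,
  [/\ D = toR Di, Di \in unitmx, Di *m Aint = Aint *m Di & (1 - Amat R) *m d = toR c].
Proof.
have [DA [c cE]] := xi_aut_Amat.
have [[Di DE] [Ei EE]] := xi_aut_int.
exists Di, c; split=> //.
  have /mulmx1_unit[] // : Di *m Ei = 1.
  by apply: toR_inj; rewrite map_mxM -DE -EE mulmxV // map_mx1.
by apply: toR_inj; rewrite !map_mxM -DE -Amat_int.
Qed.

End Automorphism.

Lemma coboundary_shape (d : 'cV[R]_3) (c : 'cV[int]_3) :
  (1 - Amat R) *m d = toR c ->
  exists c0 c2, c = cv3 c0 (2 * c0) c2 /\ (third_comp d \is a Num.int) = (2 %| c2)%Z.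
Proof.
move=> cE.
have A1E : 1 - Amat R = mx3 0 1 0 0 2 0 0 0 2.
  by rewrite /Amat; mx3_ext; lra.
have [c0E c1E c2E] : [/\ (c 0 0)%:~R = d 1 0, (c 1 0)%:~R = 2 * d 1 0
    & (c 2 0)%:~R = 2 * d 2 0 :> R].
  move: cE; rewrite A1E {1}(cv3_eta d) mx3_cv3 (cv3_eta (toR c)) => /cv3_inj[].
  by rewrite !mxE => <- <- <-; split; ring.
exists (c 0 0), (c 2 0); split.
  rewrite [LHS]cv3_eta; congr cv3; apply/eqP; rewrite -(eqr_int R) intrM; apply/eqP; lra.
have -> : third_comp d = d 2 0 by congr (d _ _); apply: val_inj.
apply/idP/idP => [/intrP[m dE] | /dvdzP[m cE2]].
  by apply/dvdzP; exists m; apply/eqP; rewrite -(eqr_int R) intrM; apply/eqP; lra.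
by apply/intrP; exists m; move: c2E; rewrite cE2 intrM; lra.
Qed.

Section Reduction.
Variables (d : 'cV[R]_3) (D : 'M[R]_3) (Di : 'M[int]_3) (c : 'cV[int]_3).
Hypotheses (DE : D = toR Di) (Di_unit : Di \in unitmx)
  (DiA : Di *m Aint = Aint *m Di) (cE : (1 - Amat R) *m d = toR c).

Let D_unit : D \in unitmx.
Proof.
have : D *m toR (invmx Di) = 1 by rewrite DE -map_mxM mulmxV // map_mx1.
by case/mulmx1_unit.
Qed.

Lemma xi_holF w B :
  B \in holF R -> xi (d, D) (w, B) = (D *m w + (1 - B) *m d, B).
Proof.
move=> hB; have DB : D *m B *m invmx D = B.
  case/holFP: hB => ->; first by rewrite mulmx1 mulmxV.
  by rewrite DE Amat_int -!map_mxM DiA map_mxM -Amat_int -DE -mulmxA mulmxV ?mulmx1.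
by rewrite xiE DB mulmxBl mul1mx [d + _]addrC -addrA.
Qed.

Lemma tw_conj_holF z B1 z' B2 : B2 \in holF R ->
  tw_conj (d, D) (z, B1) (z', B2) <-> B1 = B2 /\ exists wi B,
    B \in holF R /\ z = toR wi + B *m z' - B2 *m (D *m toR wi + (1 - B) *m d).
Proof.
move=> hB2; have aff_twE wi B : B \in holF R ->
    aff_mul (aff_mul (toR wi, B) (z', B2)) (aff_inv (xi (d, D) (toR wi, B))) =
    (toR wi + B *m z' - B2 *m (D *m toR wi + (1 - B) *m d), B2).
  move=> hB; rewrite xi_holF // /aff_mul /aff_inv /= invmx_holF // holF_conj //.
  by rewrite mulmxN !mulmxA holF_conj.
split=> [[[w B] [/in_GammaP[[wi /= ->] /= hB]]] | [-> [wi [B [hB ->]]]]].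
  by rewrite aff_twE // => -[-> ->]; split=> //; exists wi, B.
by exists (toR wi, B); rewrite aff_twE //; split=> //; apply/in_GammaP; split=> //; exists wi.
Qed.

Lemma tw_conj_coset (Bi : 'M[int]_3) z z' : Bi = 1 \/ Bi = Aint ->
  tw_conj (d, D) (toR z, toR Bi) (toR z', toR Bi) <->
  twisted_rel (1 - Bi *m Di) Aint (Bi *m c) z z'.
Proof.
move=> hBi; have Bhol : toR Bi \in holF R.
  by apply/holFP; case: hBi => ->; [left; rewrite map_mx1 | right; rewrite Amat_int].
have caseE wi (beta : bool) :
    toR wi + (if beta then Amat R else 1%:M) *m toR z' -
      toR Bi *m (D *m toR wi + (1 - (if beta then Amat R else 1%:M)) *m d) =
    toR (wi + (if beta then Aint *m z' else z') -
      Bi *m (Di *m wi + (if beta then c else 0))).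
  by case: beta; rewrite !(map_mxD, map_mxN, map_mxM) -DE -?cE ?Amat_int ?map_mx0
    ?subrr ?mul0mx ?mul1mx.
have relE := modmx_eq_1BE Bi Di z.
rewrite tw_conj_holF //; split=> [[_ [wi [B [/holFP[]-> Ez]]]] | [E | E]].
- have /toR_inj {}Ez := etrans Ez (caseE wi false); left.
  by have := (relE z' 0).2 (ex_intro _ wi Ez); rewrite mulmx0 subr0.
- have /toR_inj {}Ez := etrans Ez (caseE wi true); right.
  by apply/relE; exists wi.
- have /relE[wi Ez] : modmx_eq (1 - Bi *m Di) z (z' - Bi *m 0).
    by rewrite mulmx0 subr0.
  split=> //; exists wi, 1%:M; split; first by apply/holFP; left.
  by rewrite Ez; exact: esym (caseE wi false).
- case/relE: E => wi Ez; split=> //; exists wi, (Amat R).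
  split; first by apply/holFP; right.
  by rewrite Ez; exact: esym (caseE wi true).
Qed.

Let Aint_1BDi_comm (Bi : 'M[int]_3) : Bi = 1 \/ Bi = Aint ->
  Aint *m (1 - Bi *m Di) = (1 - Bi *m Di) *m Aint.
Proof.
rewrite mulmxBr mulmxBl mulmx1 mul1mx.
by case=> ->; rewrite ?mul1mx -?mulmxA DiA.
Qed.

Lemma classes_infinite (Bi : 'M[int]_3) : Bi = 1 \/ Bi = Aint ->
  \det (1 - Bi *m Di) = 0 -> infinitely_many_classes (d, D).
Proof.
move=> hBi det0 N.
have [f f_inj] := twisted_rel_infinite (Bi *m c) det0 AintK (Aint_1BDi_comm hBi) N.
exists (fun i => (toR (f i), toR Bi)); split=> [i | i j /(tw_conj_coset _ _ hBi)].
  apply/in_GammaP; split; first by exists (f i).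
  by apply/holFP; case: hBi => ->; [left; rewrite map_mx1 | right; rewrite Amat_int].
exact: f_inj.
Qed.

Lemma tw_conj_coset1 z z' : tw_conj (d, D) (toR z, 1%:M) (toR z', 1%:M) <->
  twisted_rel (1 - Di) Aint c z z'.
Proof. by have := tw_conj_coset z z' (or_introl erefl); rewrite map_mx1 !mul1mx. Qed.

Lemma tw_conj_cosetA z z' : tw_conj (d, D) (toR z, Amat R) (toR z', Amat R) <->
  twisted_rel (1 - Aint *m Di) Aint (Aint *m c) z z'.
Proof. by have := tw_conj_coset z z' (or_intror erefl); rewrite -Amat_int. Qed.

Lemma has_n_classes_cosets n1 n2 (f1 : 'I_n1 -> 'cV[int]_3) (f2 : 'I_n2 -> 'cV[int]_3) :
  transversal (fun=> True) (twisted_rel (1 - Di) Aint c) f1 ->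
  transversal (fun=> True) (twisted_rel (1 - Aint *m Di) Aint (Aint *m c)) f2 ->
  has_n_classes (d, D) (n1 + n2).
Proof.
move=> [_ [f1_inj f1_cov]] [_ [f2_inj f2_cov]].
pose F i := match split i with
  | inl a => (toR (f1 a), 1%:M) | inr a => (toR (f2 a), Amat R) end.
have coset_eq z B1 z' B2 : tw_conj (d, D) (z, B1) (z', B2) -> B2 \in holF R -> B1 = B2.
  by move=> + hB2 => /(tw_conj_holF _ _ _ hB2)[].
have hol1 : 1%:M \in holF R by apply/holFP; left.
have holA : Amat R \in holF R by apply/holFP; right.
exists F; split; [|split].
- by move=> i; rewrite /F; case: split => a; apply/in_GammaP; split=> //; eexists.
- move=> i j; rewrite /F -{2}(splitK i) -{2}(splitK j).
  case: (split i) => a; case: (split j) => a'.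
  + by move/tw_conj_coset1/f1_inj => ->.
  + by move/coset_eq/(_ holA)/eqP; rewrite eq_sym (negbTE Amat_neq1).
  + by move/coset_eq/(_ hol1)/eqP; rewrite (negbTE Amat_neq1).
  + by move/tw_conj_cosetA/f2_inj => ->.
- move=> [_ B] /in_GammaP[[z /= ->] /holFP[]->].
    have [a /tw_conj_coset1 ha] := f1_cov z I.
    by exists (unsplit (inl a)); rewrite /F unsplitK.
  have [a /tw_conj_cosetA ha] := f2_cov z I.
  by exists (unsplit (inr a)); rewrite /F unsplitK.
Qed.

Lemma classes_finite : \det (1 - Di) != 0 -> \det (1 - Aint *m Di) != 0 ->
  exists2 n, (2 * n = `|\det (1 - Di)| + `|\det (1 - Aint *m Di)|
                       + 2 * (if third_comp d \is a Num.int then 4 else 0))%N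
    & has_n_classes (d, D) n.
Proof.
move=> det1 det2.
have [b [p [q [t [k [DiE oddq]]]]]] := Dform_of_commute DiA Di_unit det1.
have [c0 [c2 [cE' ->]]] := coboundary_shape cE.
have oddq' : - q = 2 * (- k - 1) + 1 by rewrite oddq; ring.
have Ac : Aint *m c = cv3 (- c0) (2 * - c0) (- c2).
  by rewrite cE' /Aint mx3_cv3; congr cv3; ring.
rewrite DiE Aint_Dform in det1 det2 *.
have [n1 En1 [f1 f1_tr]] := Dform_class_count c0 c2 oddq det1.
have [n2 En2 [f2 f2_tr]] := Dform_class_count (- c0) (- c2) oddq' det2.
exists (n1 + n2)%N.
  have evenN : (2 %| - c2)%Z = (2 %| c2)%Z by rewrite rpredN.
  by rewrite evenN in En2; rewrite mulnDr En1 En2 addnACA addnn mul2n.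
apply: (has_n_classes_cosets (f1 := f1) (f2 := f2)).
  by rewrite DiE cE'.
by rewrite DiE Aint_Dform Ac.
Qed.

End Reduction.

Lemma reidemeister_eq_infinite (dD : aff R) (x y r : R) : x = 0 \/ y = 0 ->
  infinitely_many_classes dD ->
  reidemeister_eq dD ((2^-1)%:E * (abs_inf x + abs_inf y) + r%:E)%E.
Proof.
have abs_inf_ninfty (z : R) : abs_inf z != -oo%E by rewrite /abs_inf; case: ifP.
move=> xy0; suff -> : (abs_inf x + abs_inf y = +oo)%E.
  by rewrite gt0_muley ?lte_fin ?invr_gt0 // addye.
have abs_inf0 : abs_inf (0 : R) = +oo%E by rewrite /abs_inf eqxx.
by case: xy0 => ->; rewrite abs_inf0 ?(addye (abs_inf_ninfty _)) ?(addey (abs_inf_ninfty _)).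
Qed.

Lemma reidemeister_eq_finite (dD : aff R) (x y : int) (m n : nat) :
  x != 0 -> y != 0 -> (2 * n = `|x| + `|y| + 2 * m)%N -> has_n_classes dD n ->
  reidemeister_eq dD ((2^-1)%:E * (abs_inf x%:~R + abs_inf y%:~R) + m%:R%:E)%E.
Proof.
move=> x0 y0 En cl; rewrite /abs_inf !intr_eq0 (negbTE x0) (negbTE y0).
rewrite /=; exists n; split=> //.
have /= := congr1 (fun k : nat => k%:R : R) En.
by rewrite !natrD !natr_absz !intr_norm; lra.
Qed.

End RealAffine.

Theorem proposition5p12 (R : realType) (d : 'cV[R]_3) (D : 'M[R]_3) :
  xi_aut_Gamma (d, D) ->
  let delta : R := if third_comp d \is a Num.int then 1 else 0 in
  reidemeister_eq (d, D)
    ((2^-1)%:E * (\sum_(A <- holF R) abs_inf (\det (1%:M - A *m D)))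
       + (4 * delta)%:E)%E.
Proof.
move=> aut delta.
have [Di [c [DE Di_unit DiA cE]]] := xi_aut_Gamma_int aut.
have det1E : \det (1%:M - D) = (\det (1 - Di))%:~R.
  by rewrite DE -(map_mx1 intr) -map_mxB det_map_mx.
have det2E : \det (1%:M - Amat R *m D) = (\det (1 - Aint *m Di))%:~R.
  by rewrite DE Amat_int -map_mxM -(map_mx1 intr) -map_mxB det_map_mx.
rewrite /holF !big_cons big_nil adde0 mul1mx det1E det2E.
have [det1 | det1] := eqVneq (\det (1 - Di)) 0.
  apply: reidemeister_eq_infinite; first by left; rewrite det1.
  by apply: (classes_infinite DE Di_unit DiA cE (or_introl erefl)); rewrite mul1mx.
have [det2 | det2] := eqVneq (\det (1 - Aint *m Di)) 0.
  apply: reidemeister_eq_infinite; first by right; rewrite det2.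
  exact: (classes_infinite DE Di_unit DiA cE (or_intror erefl)).
have [n En cl] := classes_finite DE Di_unit DiA cE det1 det2.
have -> : 4 * delta = (if third_comp d \is a Num.int then 4 else 0)%N%:R.
  by rewrite /delta; case: ifP => _; rewrite ?mulr1 ?mulr0.
exact: reidemeister_eq_finite det1 det2 En cl.
Qed.
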